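(* Let $H$ be a real Hilbert space, $n\ge1$, and let $x_1,\dots,x_{n+1}$ be elements of the closed unit ball of $H$ with $0\in\operatorname{Co}(\{x_i:1\le i\le n+1\})$. Then for each $1\le j\le n$ there exists $J\subseteq\{1,\dots,n+1\}$ with $|J|=j$ such that $$d\bigl(0,\operatorname{Co}(\{x_i:i\in J\})\bigr)\le\sqrt{\frac{n+1-j}{nj}}.$$
   Context: $\operatorname{Co}$ denotes convex hull and $d(x,S)=\inf_{s\in S}\|x-s\|$. *)

From HB Require Import structures.
From mathcomp Require Import all_boot all_order all_algebra.
From mathcomp Require Import all_classical all_reals all_analysis.
Set Implicit Arguments. Unset Strict Implicit. Unset Printing Implicit Defensive.
Import Order.TTheory GRing.Theory Num.Theory.
Import numFieldNormedType.Exports.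
Local Open Scope classical_set_scope.
Local Open Scope ring_scope.

(* A real inner product on a real normed module V inducing its norm.
   A real Hilbert space is a complete normed module whose norm comes
   from such an inner product. *)
Definition is_inner_product_of_norm (R : realType) (V : normedModType R)
    (ip : V -> V -> R) : Prop :=
  [/\ forall x y, ip x y = ip y x,
      forall a x y z, ip (a *: x + y) z = a * ip x z + ip y z
    & forall x, `|x| = Num.sqrt (ip x x)].

Definition conv_hull (R : realType) (V : lmodType R) (S : set V) : set V :=
  [set y | forall C : set (convex_lmodType V),
      convex_set C -> (S `<=` C) -> C y].

Definition dist_set (R : realType) (V : normedModType R) (x : V) (S : set V) : R :=
  inf [set `|x - s| | s in S].

(* Let D(S) be the infimum of |y|^2 over the convex hull of {x_i : i in S}.
   Take an almost minimal p = sum_i mu_i x_i in that hull and an index k in S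
   of least weight, so that mu_k <= 1/|S|.  Removing x_k and renormalising
   moves p to p - B (x_k - p) with B = mu_k / (1 - mu_k) <= 1/(|S| - 1), and
   near-minimality gives <p, x_k - p> >= -o(1); expanding the square yields
   D(S \ k) <= (1 - eps) D(S) + eps with eps = 1/(|S| - 1)^2.  Starting from
   D({1..n+1}) = 0 and removing n + 1 - j points, the factors 1 - eps
   telescope to the bound (n + 1 - j)/(n j). *)

From HB Require Import structures.
From mathcomp Require Import all_boot all_order all_algebra.
From mathcomp Require Import all_classical all_reals all_analysis.
From mathcomp Require Import ring lra zify.
Import Order.TTheory GRing.Theory Num.Theory.
Import numFieldNormedType.Exports.
Local Open Scope classical_set_scope.
Local Open Scope ring_scope.
Set Implicit Arguments. Unset Strict Implicit. Unset Printing Implicit Defensive.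

Section InnerProduct.
Variables (R : realType) (H : normedModType R) (ip : H -> H -> R).
Hypothesis hip : is_inner_product_of_norm ip.

Lemma ipC u v : ip u v = ip v u.
Proof. by case: hip. Qed.

Lemma ipL a u v z : ip (a *: u + v) z = a * ip u z + ip v z.
Proof. by case: hip. Qed.

Lemma ip0l z : ip 0 z = 0.
Proof. by have := ipL 1 0 0 z; rewrite scaler0 add0r mul1r; lra. Qed.

Lemma ipZl a u z : ip (a *: u) z = a * ip u z.
Proof. by have := ipL a u 0 z; rewrite addr0 ip0l addr0. Qed.

Lemma ipDl u v z : ip (u + v) z = ip u z + ip v z.
Proof. by have := ipL 1 u v z; rewrite scale1r mul1r. Qed.

Lemma ipNl u z : ip (- u) z = - ip u z.
Proof. by rewrite -scaleN1r ipZl mulN1r. Qed.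

Lemma ipZr a u z : ip z (a *: u) = a * ip z u.
Proof. by rewrite ipC ipZl ipC. Qed.

Lemma ipDr u v z : ip z (u + v) = ip z u + ip z v.
Proof. by rewrite ipC ipDl ipC (ipC v). Qed.

Lemma ipNr u z : ip z (- u) = - ip z u.
Proof. by rewrite ipC ipNl ipC. Qed.

Lemma ip_norm u : ip u u = `|u| ^+ 2.
Proof.
case: hip => _ _ hn; rewrite hn.
have [h|h] := leP 0 (ip u u); first by rewrite sqr_sqrtr.
have /normr0_eq0 u0 : `|u| = 0 by rewrite hn; apply/eqP; rewrite sqrtr_eq0 ltW.
by move: h; rewrite u0 ip0l ltxx.
Qed.

Lemma ip_expand u v t :
  ip (u + t *: v) (u + t *: v) = ip u u + 2 * t * ip u v + t ^+ 2 * ip v v.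
Proof. by rewrite !(ipDl, ipDr, ipZl, ipZr) (ipC v u); ring. Qed.

(* An approximate form of the variational inequality [<p, z - p> >= 0]
   characterising the minimum-norm point of a convex set. *)
Lemma ip_ge_of_near_min p z e : 0 < e -> `|z - p| <= 2 ->
  ip p p <= ip (p + (e / 2) *: (z - p)) (p + (e / 2) *: (z - p)) + e ^+ 2 ->
  - (2 * e) <= ip p (z - p).
Proof.
move=> e0 hzp; rewrite ip_expand.
have hv : ip (z - p) (z - p) <= 4 by rewrite ip_norm; have := normr_ge0 (z - p); nra.
move=> h.
have := ler_wpM2l (sqr_ge0 (e / 2)) hv.
have : 0 <= e * (ip p (z - p) + 2 * e) by nra.
by rewrite pmulr_rge0 // => ?; lra.
Qed.

Lemma ip_extrapolate_le p z B c : `|z| <= 1 -> 0 <= B -> - c <= ip p (z - p) ->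
  ip (p - B *: (z - p)) (p - B *: (z - p))
    <= ip p p + B ^+ 2 * (1 - ip p p) + 2 * c * (B + B ^+ 2).
Proof.
move=> hz B0 hc; rewrite -scaleNr ip_expand.
have hzz : ip z z <= 1 by rewrite ip_norm expr_le1.
have -> : ip (z - p) (z - p) = ip z z - ip p p - 2 * ip p (z - p).
  by rewrite !(ipDl, ipDr, ipNl, ipNr) (ipC z p); ring.
have : 0 <= B ^+ 2 * (1 - ip z z) by rewrite mulr_ge0 ?sqr_ge0 // subr_ge0.
have : 0 <= (c + ip p (z - p)) * (B + B ^+ 2).
  by rewrite mulr_ge0 //; [lra | rewrite addr_ge0 ?sqr_ge0].
nra.
Qed.

End InnerProduct.

Section ConvexCombination.
Variables (R : realType) (V : lmodType R) (N : nat) (x : 'I_N -> V).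
Implicit Types (S : {set 'I_N}) (y : V).

Definition conv_comb S y := exists mu : 'I_N -> R,
  [/\ forall i, 0 <= mu i, forall i, i \notin S -> mu i = 0,
      \sum_i mu i = 1 & y = \sum_i mu i *: x i].

Lemma sumr_delta (F : 'I_N -> R) k : \sum_i (i == k)%:R * F i = F k.
Proof.
rewrite (bigD1 k) //= eqxx mul1r big1 ?addr0 // => i /negbTE ->.
by rewrite mul0r.
Qed.

Lemma sum_delta_scale (F : 'I_N -> V) k : \sum_i (i == k)%:R *: F i = F k.
Proof.
rewrite (bigD1 k) //= eqxx scale1r big1 ?addr0 // => i /negbTE ->.
by rewrite scale0r.
Qed.

Lemma conv_comb_vertex S k : k \in S -> conv_comb S (x k).
Proof.
move=> kS; exists (fun i => (i == k)%:R); split.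
- by move=> i; case: (i == k).
- by move=> i; apply: contraNeq; rewrite pnatr_eq0 eqb0 negbK => /eqP ->.
- by rewrite -[RHS](sumr_delta (fun=> 1) k); apply: eq_bigr => i _; rewrite mulr1.
- by rewrite sum_delta_scale.
Qed.

Lemma conv_comb_conv S y1 y2 t : 0 <= t <= 1 ->
  conv_comb S y1 -> conv_comb S y2 -> conv_comb S (t *: y1 + (1 - t) *: y2).
Proof.
move=> /andP[t0 t1] [m1 [p1 s1 e1 ->]] [m2 [p2 s2 e2 ->]].
exists (fun i => t * m1 i + (1 - t) * m2 i); split.
- by move=> i; rewrite addr_ge0 // mulr_ge0 // subr_ge0.
- by move=> i iS; rewrite s1 // s2 // !mulr0 addr0.
- by rewrite big_split /= -!mulr_sumr e1 e2 !mulr1 subrKC.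
- rewrite !scaler_sumr -big_split /=; apply: eq_bigr => i _.
  by rewrite [RHS]scalerDl !scalerA.
Qed.

(* The point is [(y - mu k *: x k) / (1 - mu k)], whose weights are those of
   [y] with [x k] removed and the rest renormalised. *)
Lemma conv_comb_drop S y mu k : (forall i, 0 <= mu i) ->
  (forall i, i \notin S -> mu i = 0) -> \sum_i mu i = 1 ->
  y = \sum_i mu i *: x i -> mu k < 1 ->
  conv_comb (S :\ k) (y - (mu k / (1 - mu k)) *: (x k - y)).
Proof.
move=> p0 s0 e1 ey mk1; set B := mu k / (1 - mu k).
have B0 : 0 <= B by rewrite divr_ge0 // subr_ge0 ltW.
have hBk : (1 + B) * mu k = B.
  by rewrite /B; field; rewrite subr_eq0 eq_sym lt_eqF.
exists (fun i => (1 + B) * mu i - (i == k)%:R * B); split.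
- move=> i; case: eqP => [->|_]; first by rewrite mul1r hBk subrr.
  by rewrite mul0r subr0 mulr_ge0 // addr_ge0.
- move=> i; rewrite !inE negb_and negbK => /orP[/eqP->|iS].
    by rewrite eqxx mul1r hBk subrr.
  have -> := s0 i iS; case: eqP => [ik|_]; last by rewrite mulr0 mul0r subrr.
  by rewrite -hBk -ik s0 // !mulr0 subrr.
- by rewrite sumrB -mulr_sumr e1 sumr_delta mulr1 addrK.
- under eq_bigr do rewrite scalerBl -!scalerA.
  rewrite sumrB -scaler_sumr -ey sum_delta_scale scalerBr scalerDl scale1r.
  by rewrite scalerA -/B opprB addrA.
Qed.

Lemma sum_weights_vertex (mu : 'I_N -> R) k : 1 <= mu k ->
  (forall i, 0 <= mu i) -> \sum_i mu i = 1 -> \sum_i mu i *: x i = x k.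
Proof.
move=> mk p0 e1; move: e1; rewrite (bigD1 k) //= => e1.
have rest0 : \sum_(i | i != k) mu i = 0.
  by apply/eqP; rewrite eq_le sumr_ge0 ?andbT //; lra.
have mk1 : mu k = 1 by lra.
rewrite (bigD1 k) //= mk1 scale1r big1 ?addr0 // => i ik.
by rewrite (psumr_eq0P _ rest0) ?scale0r.
Qed.

Lemma conv_comb_convex_set (C : set (convex_lmodType V)) S y :
  convex_set C -> (forall i, i \in S -> C (x i)) -> conv_comb S y -> C y.
Proof.
move=> hC; move Es: #|S| => s; elim: s S Es y => [|s IH] S Es y hCS.
  move=> [mu [_ s0 e1 _]]; move: e1; rewrite big1 => [/eqP|i _].
    by rewrite eq_sym oner_eq0.
  by apply: s0; rewrite (cards0_eq Es) inE.
move=> [mu [p0 s0 e1 ey]].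
have [k kS] : exists k, k \in S by apply/card_gt0P; rewrite Es.
have [mk1|mk1] := ltP (mu k) 1; last first.
  by rewrite ey (sum_weights_vertex mk1) //; exact: hCS.
set y' := y - (mu k / (1 - mu k)) *: (x k - y).
have Cy' : C y'.
  apply: (IH (S :\ k)); last exact: conv_comb_drop.
    by move: Es; rewrite (cardsD1 k S) kS => -[].
  by move=> i; rewrite inE => /andP[_ /hCS].
have := hC (x k : convex_lmodType V) y' (Itv01 (p0 k) (ltW mk1))
  (mem_set (hCS k kS)) (mem_set Cy').
rewrite inE; congr C.
change (mu k *: x k + (1 - mu k) *: y' = y).
rewrite /y' scalerBr scalerA.
have -> : (1 - mu k) * (mu k / (1 - mu k)) = mu k.
  by field; rewrite subr_eq0 eq_sym lt_eqF.
by rewrite scalerBl scale1r scalerBr opprB -addrA addKr subrKC.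
Qed.

Lemma conv_comb_hull S y : conv_comb S y -> conv_hull (x @` [set i | i \in S]) y.
Proof.
move=> hy C hC hsub; apply: (conv_comb_convex_set hC _ hy) => i iS.
by apply: hsub; exists i.
Qed.

Lemma hull_conv_comb y : conv_hull (range x) y -> conv_comb [set: 'I_N] y.
Proof.
move=> h; apply: (h [set z | conv_comb [set: 'I_N] z]).
  move=> a b t; rewrite !inE /= => ha hb.
  by apply: conv_comb_conv => //; apply/andP; split; [exact: ge0 | exact: le1].
by move=> _ [i _ <-]; apply: conv_comb_vertex; rewrite inE.
Qed.

End ConvexCombination.

Definition drop_bound (R : numFieldType) (j s : nat) : R :=
  (s - j)%:R / ((s.-1)%:R * j%:R).

Lemma drop_bound_itv (R : realFieldType) j s : (1 <= j <= s)%N ->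
  0 <= drop_bound R j s <= 1.
Proof.
move=> /andP[j1 js]; rewrite /drop_bound divr_ge0 ?mulr_ge0 //=.
have [s1|s1] := leqP s 1; first by rewrite (_ : (s - j = 0)%N) ?mul0r //; lia.
rewrite ler_pdivrMr ?mul1r -?natrM ?ler_nat ?ltr0n; nia.
Qed.

Lemma drop_bound_step (R : realFieldType) j s : (1 <= j <= s)%N ->
  (1 - drop_bound R j s) * (1 - (s%:R ^+ 2)^-1) = 1 - drop_bound R j s.+1.
Proof.
move=> /andP[j1 js]; rewrite /drop_bound.
have [s1|s1] := leqP s 1.
  have [-> ->] : s = 1%N /\ j = 1%N by lia.
  by rewrite subnn /= !(mul0r, mul1r, subr0, expr1n, invr1, subrr, divr1).
have s1R : (s.-1%:R : R) = s%:R - 1 by rewrite -subn1 natrB //; lia.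
have s0 : (s%:R : R) != 0 by rewrite pnatr_eq0; lia.
have s10 : (s%:R - 1 : R) != 0 by rewrite -s1R pnatr_eq0; lia.
have j0 : (j%:R : R) != 0 by rewrite pnatr_eq0; lia.
rewrite !natrB ?(leqW js) // [s.+1.-1]/= s1R -[s.+1]addn1 natrD.
by field; rewrite s0 s10 j0.
Qed.

Lemma exists_le_mean (R : realDomainType) (I : finType) (S : {set I}) (F : I -> R) :
  (0 < #|S|)%N -> exists2 k, k \in S & F k * #|S|%:R <= \sum_(i in S) F i.
Proof.
case/card_gt0P => k0 k0S.
have [k kS kmin] := arg_minP (P := [pred i | i \in S]) F k0S.
by exists k => //; rewrite mulr_natr -sumr_const; apply: ler_sum => i; exact: kmin.
Qed.

Lemma weight_ratio_bounds (R : realFieldType) (s m : R) :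
  1 <= s -> 0 <= m -> m * (s + 1) <= 1 ->
  [/\ m < 1, 0 <= m / (1 - m), m / (1 - m) <= 1 & (m / (1 - m)) ^+ 2 <= (s ^+ 2)^-1].
Proof.
move=> s1 m0 hm; have m1 : m < 1 by nra.
have B0 : 0 <= m / (1 - m) by rewrite divr_ge0 // subr_ge0 ltW.
have Bs : m / (1 - m) * s <= 1 by rewrite mulrAC ler_pdivrMr ?subr_gt0 // mul1r; lra.
split => //; first by nra.
rewrite -[X in _ <= X]mul1r ler_pdivlMr ?exprn_gt0 ?(lt_le_trans ltr01 s1) //.
by rewrite -exprMn expr_le1 // mulr_ge0 // (le_trans ler01 s1).
Qed.

Section MinSqnorm.
Variables (R : realType) (H : normedModType R) (ip : H -> H -> R).
Hypothesis hip : is_inner_product_of_norm ip.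
Variables (N : nat) (x : 'I_N -> H).
Hypothesis hx : forall i, `|x i| <= 1.
Implicit Types (S : {set 'I_N}) (y : H).

Definition min_sqnorm S : R := inf [set ip y y | y in conv_comb x S].

Lemma conv_comb_norm_le1 S y : conv_comb x S y -> `|y| <= 1.
Proof.
move=> [mu [p0 _ e1 ->]]; apply: le_trans (ler_norm_sum _ _ _) _.
rewrite -e1; apply: ler_sum => i _.
by rewrite normrZ ger0_norm // ler_piMr.
Qed.

Lemma min_sqnorm_lbound S : has_lbound [set ip y y | y in conv_comb x S].
Proof. by exists 0 => _ [y _ <-]; rewrite ip_norm ?sqr_ge0. Qed.

Lemma min_sqnorm_le S y : conv_comb x S y -> min_sqnorm S <= ip y y.
Proof. by move=> hy; apply: (ge_inf (min_sqnorm_lbound S)); exists y. Qed.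

Lemma min_sqnorm_approx S k e : k \in S -> 0 < e ->
  exists2 y, conv_comb x S y & ip y y < min_sqnorm S + e.
Proof.
move=> kS e0.
have [|_ [y hy <-] hye] := inf_adherent e0
  (_ : has_inf [set ip y y | y in conv_comb x S]).
  split; last exact: min_sqnorm_lbound.
  by exists (ip (x k) (x k)), (x k) => //; exact: conv_comb_vertex.
by exists y.
Qed.

Lemma near_min_ip_ge S p k e : k \in S -> 0 < e -> e <= 1 -> conv_comb x S p ->
  ip p p <= min_sqnorm S + e ^+ 2 -> - (2 * e) <= ip p (x k - p).
Proof.
move=> kS e0 e1 hp hpD; apply: (ip_ge_of_near_min hip e0).
  apply: le_trans (ler_normB _ _) _.
  by rewrite (_ : 2 = 1 + 1) // lerD // (conv_comb_norm_le1 hp).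
have e2 : 0 <= e / 2 <= 1 by apply/andP; split; lra.
have := min_sqnorm_le (conv_comb_conv e2 (conv_comb_vertex x kS) hp).
rewrite scalerBl scale1r addrCA -scalerBr addrC.
lra.
Qed.

Lemma min_sqnorm_drop S eta : (1 < #|S|)%N -> 0 < eta ->
  let eps := ((#|S|.-1)%:R ^+ 2)^-1 in
  exists2 k, k \in S &
    min_sqnorm (S :\ k) <= (1 - eps) * min_sqnorm S + eps + eta.
Proof.
move=> hS eta0 eps.
have [k0 k0S] : exists k, k \in S by apply/card_gt0P; lia.
set e := Num.min 1 (eta / 9).
have e0 : 0 < e by rewrite lt_min ltr01 divr_gt0.
have e1 : e <= 1 by rewrite ge_min lexx.
have e9 : e <= eta / 9 by rewrite ge_min lexx orbT.
have [p hp /ltW hpD] := min_sqnorm_approx k0S (exprn_gt0 2 e0).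
have [mu [p0 s0 mu1 ep]] := hp.
have [k kS hmk] := exists_le_mean mu (ltnW hS).
exists k => //.
have hmu : \sum_(i in S) mu i = 1.
  by rewrite -mu1 [RHS](bigID [pred i | i \in S]) /= [X in _ = _ + X]big1 ?addr0.
set s1 := (#|S|.-1)%:R : R.
have s1ge1 : 1 <= s1 by rewrite /s1 (ler_nat R 1); lia.
have hmk1 : mu k * (s1 + 1) <= 1.
  by rewrite /s1 natr1 prednK; [rewrite -[X in _ <= X]hmu | lia].
have [mk1 B0 B1 Beps] := weight_ratio_bounds s1ge1 (p0 k) hmk1.
have eps1 : eps <= 1 by rewrite invf_le1 ?exprn_gt0 ?expr_ge1 ?(lt_le_trans ltr01).
have hp1 : ip p p <= 1 by rewrite ip_norm // expr_le1 // (conv_comb_norm_le1 hp).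
have near_min := near_min_ip_ge kS e0 e1 hp hpD.
have := le_trans (min_sqnorm_le (conv_comb_drop p0 s0 mu1 ep mk1))
  (ip_extrapolate_le hip (hx k) B0 near_min).
move: B0 B1 Beps; set B := mu k / (1 - mu k) => B0 B1 Beps.
have : B ^+ 2 * (1 - ip p p) <= eps * (1 - ip p p) by rewrite ler_wpM2r // subr_ge0.
have : (1 - eps) * ip p p <= (1 - eps) * (min_sqnorm S + e ^+ 2).
  by rewrite ler_wpM2l // subr_ge0.
have B2 : B ^+ 2 <= 1 by rewrite expr_le1.
have : 2 * (2 * e) * (B + B ^+ 2) <= 2 * (2 * e) * 2 by rewrite ler_wpM2l //; lra.
have : e ^+ 2 <= e by rewrite expr2 ler_piMr // ltW.
have : 0 <= eps * e ^+ 2 by rewrite mulr_ge0 ?sqr_ge0 // invr_ge0 sqr_ge0.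
lra.
Qed.

Lemma exists_subset_min_sqnorm_le j s S eta : (1 <= j <= s)%N -> #|S| = s ->
  0 < eta -> exists J : {set 'I_N}, [/\ J \subset S, #|J| = j &
    min_sqnorm J <= (1 - drop_bound R j s) * min_sqnorm S + drop_bound R j s + eta].
Proof.
elim: s S eta => [|s IH] S eta /andP[j1 js] hS eta0; first by lia.
have [sj|lt_js] := eqVneq j s.+1.
  by exists S; rewrite hS sj /drop_bound subnn mul0r subr0 mul1r addr0 lerDl ltW.
have js' : (1 <= j <= s)%N by rewrite j1 -ltnS ltn_neqAle lt_js.
have eta2 : 0 < eta / 2 by rewrite divr_gt0.
have [|k kS hk] := min_sqnorm_drop (S := S) _ eta2; first by lia.
have hSk : #|S :\ k| = s by move: hS; rewrite (cardsD1 k S) kS => -[].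
have [J [JS cJ hJ]] := IH (S :\ k) _ js' hSk eta2.
exists J; split => //; first exact: fintype.subset_trans JS (subD1set S k).
rewrite hS /= in hk.
have /andP[f0 f1] := drop_bound_itv R js'.
have -> : drop_bound R j s.+1 = 1 - (1 - drop_bound R j s.+1) by rewrite subKr.
rewrite -drop_bound_step //; move: hk hJ f0 f1.
set f := drop_bound R j s; set eps := (s%:R ^+ 2)^-1 => hk hJ f0 f1.
have := ler_wpM2l (_ : 0 <= 1 - f) hk; rewrite subr_ge0 => /(_ f1).
have : (1 - f) * (eta / 2) <= eta / 2 by rewrite ler_piMl //; lra.
lra.
Qed.

Lemma exists_card_min_sqnorm_le j : (1 <= j <= N)%N -> exists J : {set 'I_N}, #|J| = j /\
  min_sqnorm J <= (1 - drop_bound R j N) * min_sqnorm [set: 'I_N] + drop_bound R j N.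
Proof.
move=> hj; set bound := _ + drop_bound R j N.
have near eta : 0 < eta ->
    exists J : {set 'I_N}, #|J| = j /\ min_sqnorm J <= bound + eta.
  move=> eta0.
  have [|J [_ cJ hJ]] := exists_subset_min_sqnorm_le (S := [set: _]) hj _ eta0.
    by rewrite cardsT card_ord.
  by exists J.
have [J1 [cJ1 _]] := near 1 ltr01.
have [J cJ Jmin] := arg_minP (i0 := J1)
  (P := [pred J : {set 'I_N} | #|J| == j]) min_sqnorm (introT eqP cJ1).
exists J; split; first exact/eqP.
apply/ler_addgt0Pr => eta eta0; have [J' [cJ' hJ']] := near eta eta0.
by apply: le_trans hJ'; apply: Jmin; rewrite /= cJ'.
Qed.

Lemma dist_hull_le_sqrt (J : {set 'I_N}) : (0 < #|J|)%N ->
  dist_set 0 (conv_hull (x @` [set i | i \in J])) <= Num.sqrt (min_sqnorm J).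
Proof.
case/card_gt0P => k kJ; set C := conv_hull _.
have Clb : has_lbound [set `|0 - y| | y in C] by exists 0 => _ [y _ <-].
have d0 : 0 <= dist_set 0 C.
  apply: lb_le_inf => [|_ [y _ <-] //].
  by exists `|0 - x k|, (x k) => //; exact: conv_comb_hull (conv_comb_vertex x kJ).
rewrite -(ger0_norm d0) -sqrtr_sqr; apply: ler_wsqrtr.
apply/ler_addgt0Pr => e e0; have [y hy hye] := min_sqnorm_approx kJ e0.
have dy : dist_set 0 C <= `|y|.
  rewrite -normrN -[- y]add0r; apply: (ge_inf Clb).
  by exists y => //; exact: conv_comb_hull.
have : dist_set 0 C ^+ 2 <= `|y| ^+ 2 by rewrite ler_pXn2r // ?nnegrE // (le_trans d0).
by rewrite -(ip_norm hip); lra.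
Qed.

End MinSqnorm.

Theorem theorem5p2 (R : realType) (H : completeNormedModType R)
    (ip : H -> H -> R) (hip : is_inner_product_of_norm ip)
    (n : nat) (hn : (1 <= n)%N) (x : 'I_n.+1 -> H)
    (hx : forall i, `|x i| <= 1)
    (h0 : conv_hull (range x) 0) :
  forall j : nat, (1 <= j <= n)%N ->
    exists J : {set 'I_n.+1}, #|J| = j /\
      dist_set 0 (conv_hull (x @` [set i | i \in J]))
        <= Num.sqrt ((n.+1 - j)%:R / (n * j)%:R).
Proof.
move=> j /andP[j1 jn]; have hj : (1 <= j <= n.+1)%N by rewrite j1 leqW.
have [J [cJ hJ]] := exists_card_min_sqnorm_le hip hx hj.
exists J; split => //.
have cJ0 : (0 < #|J|)%N by rewrite cJ.
apply: le_trans (dist_hull_le_sqrt hip x cJ0) _.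
rewrite natrM; apply/ler_wsqrtr/(le_trans hJ).
have hull0 : min_sqnorm ip x [set: 'I_n.+1] <= 0.
  by apply: le_trans (min_sqnorm_le hip (hull_conv_comb h0)) _; rewrite ip0l.
have /andP[_ f1] := drop_bound_itv R hj.
by rewrite gerDr mulr_ge0_le0 // subr_ge0.
Qed.
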